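(* Let $\nu\in M_0(\mathbb D^* )$ and let $W$ be a M\''obius transformation of $\widehat{\mathbb C}$ such that $W\circ F_\nu$ is holomorphic on $\mathbb D$. If $\Phi=\log(W\circ F_\nu)'$ belongs to $B_0(\mathbb D)$, then $W\circ F_\nu$ maps $\mathbb D$ onto a bounded domain in $\mathbb C$.
   Context: $\mathbb D$ is the unit disk, $\widehat{\mathbb C}=\mathbb C\cup\{\infty\}$, $\mathbb D^*=\widehat{\mathbb C}\setminus\overline{\mathbb D}$. $M(\mathbb D^* )=\{\mu\in L^\infty(\mathbb D^* ):\|\mu\|_\infty<1\}$, and $M_0(\mathbb D^* )=\{\mu\in M(\mathbb D^* ):\lim_{t\to0}\operatorname{ess\,sup}_{|z|<1+t}|\mu(z)|=0\}$ (asymptotically conformal Beltrami coefficients). For $\mu\in M(\mathbb D^* )$, $F_\mu$ is the unique conformal homeomorphism of $\mathbb D$ onto a bounded domain in $\mathbb C$ with $F_\mu(0)=0$, $F_\mu'(0)=1$, extending to a quasiconformal self-homeomorphism of $\widehat{\mathbb C}$ with $F_\mu(\infty)=\infty$ and complex dilatation $\mu$ on $\mathbb D^*$. $B_0(\mathbb D)$ (little Bloch space) is the space of holomorphic $\Phi$ on $\mathbb D$ with $\sup_{z\in\mathbb D}(1-|z|^2)|\Phi'(z)|<\infty$ and $\lim_{t\to0}\sup_{|z|>1-t}(1-|z|^2)|\Phi'(z)|=0$ (functions differing by constants identified). *)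

(* The complex plane is modelled by [R[i]^o]
   (mathcomp-real-closed complex numbers over a [realType] R, viewed as a
   normed module over itself, so that ['D_1 f z] is the complex derivative).
   Lebesgue measure on the plane is the product Lebesgue measure on [R * R],
   transported by [toC]. *)
From HB Require Import structures.
From mathcomp Require Import all_boot all_order all_algebra.
From mathcomp Require Import all_classical all_reals all_analysis.
From mathcomp Require Import complex.
Set Implicit Arguments.
Unset Strict Implicit.
Unset Printing Implicit Defensive.
Import Order.TTheory GRing.Theory Num.Theory.
Import numFieldNormedType.Exports.
Local Open Scope ring_scope.
Local Open Scope classical_set_scope.

Section Defs.
Variable R : realType.

Local Notation C := (R[i])^o.

Definition toC (p : R * R) : C := Complex p.1 p.2.

Definition rC (x : R) : C := Complex x 0.

Definition iC : C := Complex 0 1.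

Definition leb2 := (@lebesgue_measure R \x @lebesgue_measure R)%E.

Definition disk : set C := [set z | `|z| < 1].

Definition Dstar2 : set (R * R) := [set p | 1 < p.1 ^+ 2 + p.2 ^+ 2].

Definition holo_on (f : C -> C) (A : set C) : Prop :=
  forall z, A z -> derivable f z 1.

Definition cexp (w : C) : C :=
  rC (expR (complex.Re w)) * Complex (cos (complex.Im w)) (sin (complex.Im w)).

Definition beltrami_coeff (nu : C -> C) : Prop :=
  measurable_fun Dstar2 (fun p => complex.Re (nu (toC p))) /\
  measurable_fun Dstar2 (fun p => complex.Im (nu (toC p))) /\
  exists k : R, k < 1 /\
    {ae leb2, forall p, Dstar2 p -> `|nu (toC p)| <= rC k}.

Definition asymp_conformal (nu : C -> C) : Prop :=
  beltrami_coeff nu /\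
  forall eps : R, 0 < eps -> exists t : R, 0 < t /\
    {ae leb2, forall p, Dstar2 p -> p.1 ^+ 2 + p.2 ^+ 2 < (1 + t) ^+ 2 ->
       `|nu (toC p)| <= rC eps}.

Definition abs_cont_on (a b : R) (g : R -> C) : Prop :=
  forall eps : R, 0 < eps -> exists delta : R, 0 < delta /\
    forall (n : nat) (u v : nat -> R),
      (forall k, (k < n)%N -> a <= u k /\ u k <= v k /\ v k <= b) ->
      (forall i j, (i < n)%N -> (j < n)%N -> i <> j ->
         v i <= u j \/ v j <= u i) ->
      \sum_(k < n) (v k - u k) < delta ->
      \sum_(k < n) `|g (v k) - g (u k)| < rC eps.

Definition ACL (f : C -> C) : Prop :=
  forall a b c d : R,
    {ae @lebesgue_measure R, forall y, c <= y <= d ->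
       abs_cont_on a b (fun x => f (toC (x, y)))} /\
    {ae @lebesgue_measure R, forall x, a <= x <= b ->
       abs_cont_on c d (fun y => f (toC (x, y)))}.

(* f has complex dilatation mu almost everywhere on A (subset of R * R):
   the partial derivatives f_x, f_y exist and
   f_zbar = (f_x + i f_y)/2 = mu * f_z = mu * (f_x - i f_y)/2 *)
Definition dilatation_on (f : C -> C) (mu : C -> C) (A : set (R * R)) : Prop :=
  {ae leb2, forall p, A p -> exists fx fy : C,
     ((fun h : R => (f (toC p + rC h) - f (toC p)) / rC h) @ (0 : R)^' --> fx) /\
     ((fun h : R => (f (toC p + iC * rC h) - f (toC p)) / rC h) @ (0 : R)^' --> fy) /\
     (fx + iC * fy) / 2 = mu (toC p) * ((fx - iC * fy) / 2)}.

Definition is_F (nu : C -> C) (F : C -> C) : Prop :=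
  (* quasiconformal self-homeomorphism of the plane (fixing infinity) *)
  (exists G : C -> C, cancel F G /\ cancel G F /\ continuous F /\ continuous G) /\
  ACL F /\
  holo_on F disk /\ F 0 = 0 /\ 'D_1 F 0 = 1 /\ bounded_set (F @` disk) /\
  dilatation_on F nu Dstar2.

Definition mobius (a b c d : C) (z : C) : C := (a * z + b) / (c * z + d).

Definition little_bloch (Phi : C -> C) : Prop :=
  holo_on Phi disk /\
  (exists M : R, forall z, disk z -> (1 - `|z| ^+ 2) * `|'D_1 Phi z| <= rC M) /\
  (forall eps : R, 0 < eps -> exists t : R, 0 < t /\
     forall z, disk z -> 1 - rC t < `|z| ->
       (1 - `|z| ^+ 2) * `|'D_1 Phi z| <= rC eps).

End Defs.

(* Write G := W \o F_nu.  Along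
   a radius s |-> s zeta, the Bloch bound controls Re Phi away from the circle
   and the little-Bloch condition with constant 1/2 controls it near the
   circle, giving Re Phi (s zeta) <= A - (1/2) ln (1 - s).  Hence
   |G'(s zeta)| = exp (Re Phi) <= e^A / sqrt (1 - s), which is integrable:
   |G w - G 0| <= 2 e^A.  Both radial integrations are monotonicity arguments
   for a real function with nonpositive derivative.  Openness needs only that
   F_nu is a homeomorphism of the plane and that W has no pole on F_nu(D) (the
   continuous G would blow up there); connectedness holds because D is
   star-shaped. *)

From HB Require Import structures.
From mathcomp Require Import all_boot all_order all_algebra.
From mathcomp Require Import all_classical all_reals all_analysis.
From mathcomp Require Import complex.
From mathcomp Require Import ring lra.
Import Order.TTheory GRing.Theory Num.Theory.
Import numFieldNormedType.Exports.
Local Open Scope ring_scope.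
Local Open Scope classical_set_scope.
Local Open Scope complex_scope.

Section ComplexPlane.
Variable R : realType.
Local Notation C := (R[i])^o.
Local Notation Re := complex.Re.
Local Notation normc := (@Normc.normc R).

Lemma rCE (x : R) : rC x = x%:C.
Proof. by []. Qed.

Lemma normr_normc (z : C) : `|z| = (normc z)%:C.
Proof. by case: z => a b; rewrite normc_def. Qed.

Lemma normc_ge0 (z : C) : 0 <= normc z.
Proof. by case: z => a b; exact: sqrtr_ge0. Qed.

Lemma normc_real (x : R) : normc x%:C = `|x|.
Proof. by rewrite /= expr0n /= addr0 sqrtr_sqr. Qed.

Lemma normc_eq0 (z : C) : (normc z == 0) = (z == 0).
Proof. by rewrite -[z == 0]normr_eq0 normr_normc fmorph_eq0. Qed.

Lemma Re_le_normc (z : C) : `|Re z| <= normc z.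
Proof. by have := normc_ge_Re z; rewrite normr_normc lecR. Qed.

Lemma Re_normr (z : C) : Re `|z| = normc z.
Proof. by rewrite normr_normc. Qed.

Lemma Re_mul_real (x : R) (w : C) : Re (x%:C * w) = x * Re w.
Proof. by case: w => a b; simpc. Qed.

Lemma Re_mul_le_normc (e w : C) : normc e <= 1 -> Re (e * w) <= normc w.
Proof.
move=> e1; apply: le_trans (ler_norm _) _; apply: le_trans (Re_le_normc _) _.
by rewrite Normc.normcM ler_piMl ?normc_ge0.
Qed.

Lemma normc_le_Re_mul (x : C) (B : R) :
  (forall e : C, normc e <= 1 -> Re (e * x) <= B) -> normc x <= B.
Proof.
move=> Re_le; have [->|x0] := eqVneq x 0.
  by rewrite Normc.normc0; have := Re_le 0; rewrite mul0r Normc.normc0 ler01; apply.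
have nx0 : `|x| != 0 by rewrite normr_eq0.
have := Re_le (x^* / `|x|).
rewrite mulrAC [x^* * x]mulrC -sqr_normc expr2 mulfK // Re_normr; apply.
by rewrite -lecR -normr_normc normrM normrV ?unitfE // normcJ normr_id divff.
Qed.

Lemma polar_decomposition (w : C) :
  exists2 zeta : C, normc zeta = 1 & w = (normc w)%:C * zeta.
Proof.
have [->|w0] := eqVneq w 0.
  by exists 1; rewrite ?Normc.normc1 // Normc.normc0 mul0r.
have nw0 : normc w != 0 by rewrite normc_eq0.
exists (w / (normc w)%:C); last by rewrite mulrC divfK // fmorph_eq0.
by rewrite Normc.normcM Normc.normcV normc_real ger0_norm ?normc_ge0 // mulfV.
Qed.

Lemma normc_cexp (w : C) : normc (cexp w) = expR (Re w).
Proof.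
rewrite /cexp Normc.normcM normc_real ger0_norm ?expR_ge0 //=.
by rewrite cos2Dsin2 sqrtr1 mulr1.
Qed.

Lemma normc_le_bounded_set (A : set C) (B : R) :
  (forall z, A z -> normc z <= B) -> bounded_set A.
Proof.
move=> A_le; exists B%:C; split; first by rewrite complex_real.
by move=> M BM z Az /=; rewrite normr_normc (le_trans _ (ltW BM)) ?lecR ?A_le.
Qed.

Lemma disk_normc (z : C) : disk z <-> normc z < 1.
Proof. by rewrite /disk /= normr_normc ltcR. Qed.

Lemma disk_open : open (@disk R).
Proof.
have -> : @disk R = ball (0 : C) 1.
  by apply/seteqP; split => z; rewrite /disk /ball /= sub0r normrN.
exact: ball_open.
Qed.

Lemma normr_radial (zeta : C) (s : R) : normc zeta = 1 -> 0 <= s ->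
  `|s%:C * zeta| = s%:C.
Proof.
by move=> zeta1 s0; rewrite normr_normc Normc.normcM zeta1 mulr1 normc_real ger0_norm.
Qed.

Lemma radial_disk (zeta : C) (s : R) :
  normc zeta = 1 -> 0 <= s < 1 -> disk (s%:C * zeta).
Proof. by move=> zeta1 /andP[s0 s1]; rewrite /disk /= normr_radial // ltcR. Qed.

Lemma disk_scale (w : C) (s : R) : disk w -> 0 <= s <= 1 -> disk (s%:C * w).
Proof.
move=> /disk_normc w1 /andP[s0 s1]; apply/disk_normc.
rewrite Normc.normcM normc_real ger0_norm //.
by apply: le_lt_trans w1; rewrite ler_piMl ?normc_ge0.
Qed.

Lemma continuous_Re : continuous (fun z : C => Re z).
Proof.
move=> z; apply/(@cvgrPdist_lt _ _ _ (nbhs z) _) => e e0; near=> y.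
rewrite -raddfB /=; apply: le_lt_trans (Re_le_normc _) _.
rewrite -ltcR -normr_normc.
by near: y; apply: cvgr_dist_lt; rewrite ?ltcR.
Unshelve. all: by end_near.
Qed.

Lemma continuous_real_complex : continuous (fun s : R => s%:C : C).
Proof.
move=> s; apply/(@cvgrPdist_lt _ _ _ (nbhs s) _) => e.
rewrite ltcE /= => /andP[/eqP Ime Ree].
near=> t; rewrite -rmorphB normr_normc normc_real ltcE /= Ime eqxx /=.
by near: t; apply: cvgr_dist_lt.
Unshelve. all: by end_near.
Qed.

Lemma continuous_mul_real (w : C) : continuous (fun s : R => s%:C * w : C).
Proof.
move=> s.
exact: (continuous_comp (continuous_real_complex s) (@mulrr_continuous C w _)).
Qed.

Lemma cvg_mul_real_dnbhs (zeta : C) : zeta != 0 ->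
  (fun s : R => s%:C * zeta) @ 0^' --> (0 : C)^'.
Proof.
move=> zeta0 P /= P_near.
have := continuous_mul_real zeta 0; rewrite /continuous_at /= rmorph0 mul0r.
move=> /(_ _ P_near) P_near0.
suff : \forall s \near (0 : R)^', P (s%:C * zeta) by [].
near=> s.
have s0 : s != 0 by near: s; exact: nbhs_dnbhs_neq.
have : s%:C * zeta != 0 -> P (s%:C * zeta).
  by near: s; apply: cvg_within; exact: P_near0.
by apply; rewrite mulf_neq0 // fmorph_eq0.
Unshelve. all: by end_near.
Qed.

Lemma is_derive_Re_radial (H : C -> C) (e zeta : C) (r : R) :
  zeta != 0 -> derivable H (r%:C * zeta) 1 ->
  is_derive r 1 (fun s : R => Re (e * H (s%:C * zeta)))
    (Re (e * zeta * 'D_1 H (r%:C * zeta))).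
Proof.
move=> zeta0 dH; set z := r%:C * zeta.
have dq : (fun h : C => h^-1 *: ((H \o shift z) (h *: 1) - H z)) @ 0^'
  --> 'D_1 H z := dH.
set q := fun h : C => _ in dq.
have key : (fun s : R => s^-1 *: (Re (e * H ((s *: 1 + r)%:C * zeta))
    - Re (e * H z))) @ 0^' --> Re (e * zeta * 'D_1 H z).
  apply: (@cvg_trans _ ((fun s => Re (e * zeta * q (s%:C * zeta))) @ 0^')).
    apply: near_eq_cvg; near=> s.
    have s0 : s != 0 by near: s; exact: nbhs_dnbhs_neq.
    rewrite /q /= -raddfB /= -mulrBr [s%:A]mulr1 [(_ * zeta)%:A]mulr1.
    rewrite /z -mulrDl -rmorphD.
    rewrite [in RHS]/GRing.scale /= -Re_mul_real; congr Re.
    rewrite /GRing.scale /= rmorphV ?unitfE //= invfM mulrCA -!mulrA.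
    by rewrite [e * (zeta * _)]mulrCA mulKf.
  have hRe : (fun h => Re (e * zeta * q h)) @ 0^' --> Re (e * zeta * 'D_1 H z).
    apply: (cvg_comp q (fun w => Re (e * zeta * w)) dq).
    exact: (continuous_comp (@mulrl_continuous C (e * zeta) _) (continuous_Re _)).
  exact: (cvg_comp _ _ (cvg_mul_real_dnbhs _ zeta0) hRe).
apply: DeriveDef; last exact: cvg_lim key.
by apply/cvg_ex; exists (Re (e * zeta * 'D_1 H z)).
Unshelve. all: by end_near.
Qed.

Lemma holo_on_continuous (G : C -> C) (A : set C) :
  holo_on G A -> forall z, A z -> {for z, continuous G}.
Proof.
by move=> holoG z Az; apply/differentiable_continuous/derivable1_diffP/holoG.
Qed.

Lemma ler0_is_derive_nincr (v dv : R -> R) (a b : R) : a <= b ->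
  (forall s, a <= s <= b -> is_derive s 1 v (dv s)) ->
  (forall s, a < s < b -> dv s <= 0) -> v b <= v a.
Proof.
move=> ab dv_v dv_le0.
have itv_le s : a < s < b -> a <= s <= b by move=> /andP[? ?]; rewrite !ltW.
apply: (@ler0_derive1_le_cc R v a b); rewrite ?in_itv /= ?lexx ?ab //.
- by move=> s; rewrite in_itv /= => /itv_le /dv_v.
- move=> s; rewrite in_itv /= => s_ab.
  have dv_s := dv_v s (itv_le s s_ab).
  by rewrite derive1E derive_val; exact: dv_le0.
- apply: derivable_within_continuous => s; rewrite in_itv /= => s_ab.
  by have := dv_v s s_ab.
Qed.

Lemma is_derive_1B (s : R) : is_derive s 1 (fun x : R => 1 - x) (-1).
Proof. by rewrite -[X in is_derive _ _ _ X]sub0r; exact: is_deriveB. Qed.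

Lemma is_derive_ln1B (s : R) : s < 1 ->
  is_derive s 1 (fun x => ln (1 - x)) (- (1 - s)^-1).
Proof.
move=> s1; rewrite -mulrN1.
apply: is_derive1_comp; last exact: is_derive_1B.
by apply: is_derive1_ln; rewrite subr_gt0.
Qed.

Lemma is_derive_sqrt1B (s : R) : s < 1 ->
  is_derive s 1 (fun x => Num.sqrt (1 - x)) (- (2 * Num.sqrt (1 - s))^-1).
Proof.
move=> s1; rewrite -mulrN1.
apply: is_derive1_comp; last exact: is_derive_1B.
by apply: is_derive1_sqrt; rewrite subr_gt0.
Qed.

Lemma expR_sub_half_ln (a y : R) : 0 < y ->
  expR (a - 2^-1 * ln y) = expR a / Num.sqrt y.
Proof.
move=> y0; rewrite expRD expRN; congr (_ / _).
have half : 2^-1 * ln y * 2%:R = ln y by lra.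
rewrite -[in RHS](lnK y0) -[in RHS]half expRM_natr sqrtr_sqr.
by rewrite ger0_norm // expR_ge0.
Qed.

Lemma Re_radial_bloch_le (Phi : C -> C) (zeta : C) (K r0 r : R) :
  normc zeta = 1 -> 0 <= r0 <= r -> r < 1 ->
  (forall s, r0 <= s <= r -> derivable Phi (s%:C * zeta) 1) ->
  (forall s, r0 < s < r -> (1 - s ^+ 2) * normc ('D_1 Phi (s%:C * zeta)) <= K) ->
  Re (Phi (r%:C * zeta)) + K * ln (1 - r) <=
  Re (Phi (r0%:C * zeta)) + K * ln (1 - r0).
Proof.
move=> zeta1 /andP[r0_ge0 r0r] r1 dPhi bloch.
have zeta0 : zeta != 0 by rewrite -normc_eq0 zeta1 oner_neq0.
pose v s := Re (1 * Phi (s%:C * zeta)) + K * ln (1 - s).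
pose dv s := Re (1 * zeta * 'D_1 Phi (s%:C * zeta)) + K * - (1 - s)^-1.
suff : v r <= v r0 by rewrite /v !mul1r.
apply: (@ler0_is_derive_nincr v dv) => // s /andP[r0s sr].
  apply: is_deriveD; first exact/is_derive_Re_radial/dPhi/andP.
  by apply: is_deriveZ; apply: is_derive_ln1B; exact: le_lt_trans r1.
have s1 : 0 < 1 - s by rewrite subr_gt0 (lt_trans sr).
rewrite /dv mul1r mulrN subr_le0 ler_pdivlMr //.
apply: le_trans (bloch s _); last by rewrite r0s.
have Re_le : Re (zeta * 'D_1 Phi (s%:C * zeta)) <= normc ('D_1 Phi (s%:C * zeta)).
  by apply: Re_mul_le_normc; rewrite zeta1.
rewrite mulrC (le_trans (ler_wpM2l (ltW s1) Re_le)) //.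
have s_ge0 : 0 <= s by rewrite (le_trans r0_ge0) ?ltW.
by rewrite ler_wpM2r ?normc_ge0 // lerB // expr2 ler_piMl // ltW // (lt_trans sr).
Qed.

Lemma Re_radial_little_bloch_le (Phi : C -> C) (zeta : C) (M t : R) :
  normc zeta = 1 -> 0 < t <= 1 ->
  (forall s, 0 <= s < 1 -> derivable Phi (s%:C * zeta) 1) ->
  (forall s, 0 <= s < 1 -> (1 - s ^+ 2) * normc ('D_1 Phi (s%:C * zeta)) <= M) ->
  (forall s, 1 - t < s < 1 ->
     (1 - s ^+ 2) * normc ('D_1 Phi (s%:C * zeta)) <= 2^-1) ->
  forall r, 0 <= r < 1 ->
  Re (Phi (r%:C * zeta)) <= Re (Phi 0) - M * ln t - 2^-1 * ln (1 - r).
Proof.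
move=> zeta1 /andP[t0 t1] dPhi boundM bound_half r /andP[r0 r1].
have Phi0 : Phi (0%:C * zeta) = Phi 0 by rewrite mul0r.
have M0 : 0 <= M.
  apply: le_trans (boundM 0 _); last by rewrite lexx ltr01.
  by rewrite expr0n subr0 mul1r normc_ge0.
have from_center r' : 0 <= r' < 1 ->
    Re (Phi (r'%:C * zeta)) <= Re (Phi 0) - M * ln (1 - r').
  move=> /andP[r'0 r'1]; rewrite lerBrDr -Phi0.
  have := @Re_radial_bloch_le Phi zeta M 0 r' zeta1.
  rewrite lexx r'0 subr0 ln1 mulr0 addr0; apply=> // s /andP[s0 s1].
    by apply: dPhi; rewrite s0 (le_lt_trans s1).
  by apply: boundM; rewrite ltW //= (lt_trans s1).
have lnt : ln t <= 0 by exact: ln_le0.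
have ln1r : ln (1 - r) <= 0 by rewrite ln_le0 // lerBlDr lerDl.
have [r_le|r_gt] := leP r (1 - t).
  have : M * ln t <= M * ln (1 - r) by rewrite ler_wpM2l // ler_ln ?posrE; lra.
  have := from_center r; rewrite r0 r1 => /(_ isT); lra.
have t_ge0 : 0 <= 1 - t by rewrite subr_ge0.
have near_circle : Re (Phi (r%:C * zeta)) + 2^-1 * ln (1 - r) <=
    Re (Phi ((1 - t)%:C * zeta)) + 2^-1 * ln t.
  rewrite -[in ln t](subKr 1 t); apply: Re_radial_bloch_le => //.
  - by rewrite t_ge0 ltW.
  - move=> s /andP[s0 s1]; apply: dPhi.
    by rewrite (le_trans t_ge0) // (le_lt_trans s1).
  - by move=> s /andP[s0 s1]; apply: bound_half; rewrite s0 (lt_trans s1).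
have := from_center (1 - t); rewrite t_ge0 subKr ltrBlDr ltrDl t0 => /(_ isT); lra.
Qed.

Lemma bloch_weight_radial (zeta w : C) (s K : R) :
  normc zeta = 1 -> 0 <= s ->
  ((1 - `|s%:C * zeta| ^+ 2) * `|w| <= rC K) = ((1 - s ^+ 2) * normc w <= K).
Proof.
move=> zeta1 s0; rewrite normr_radial // normr_normc rCE -lecR.
by congr (_ <= _); rewrite !expr2; simpc.
Qed.

Lemma little_bloch_Re_radial_le (Phi : C -> C) : little_bloch Phi ->
  exists A : R, forall zeta s, normc zeta = 1 -> 0 <= s < 1 ->
    Re (Phi (s%:C * zeta)) <= A - 2^-1 * ln (1 - s).
Proof.
move=> [holoPhi [[M boundM] little]].
have [t [t0 bound_half]] := little 2^-1 ltac:(by rewrite invr_gt0 ltr0n).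
exists (Re (Phi 0) - M * ln (Num.min t 1)) => zeta s zeta1 s01.
apply: (@Re_radial_little_bloch_le Phi zeta M (Num.min t 1) zeta1) => //.
- by rewrite lt_min t0 ltr01 ge_min lexx orbT.
- by move=> s' s'01; apply: holoPhi; exact: radial_disk.
- move=> s' s'01; have /andP[s'0 _] := s'01.
  by rewrite -(bloch_weight_radial _ _ _ _ zeta1 s'0); apply/boundM/radial_disk.
- move=> s' /andP[s't s'1]; have s'0 : 0 <= s'.
    by rewrite (le_trans _ (ltW s't)) // subr_ge0 ge_min lexx orbT.
  rewrite -(bloch_weight_radial _ _ _ _ zeta1 s'0); apply: bound_half.
    by apply: radial_disk; rewrite // s'0.
  rewrite normr_radial // rCE -(rmorph1 (real_complex R)) -rmorphB ltcR.
  by rewrite (le_lt_trans _ s't) // lerB // ge_min lexx.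
Qed.

Lemma Re_radial_sqrt_le (G : C -> C) (zeta e : C) (E : R) :
  normc zeta = 1 -> normc e <= 1 ->
  (forall s, 0 <= s < 1 -> derivable G (s%:C * zeta) 1) ->
  (forall s, 0 <= s < 1 ->
     normc ('D_1 G (s%:C * zeta)) <= E / Num.sqrt (1 - s)) ->
  forall r, 0 <= r < 1 -> Re (e * (G (r%:C * zeta) - G 0)) <= 2 * E.
Proof.
move=> zeta1 e1 dG boundG r /andP[r0 r1].
have zeta0 : zeta != 0 by rewrite -normc_eq0 zeta1 oner_neq0.
have E0 : 0 <= E.
  have := boundG 0; rewrite lexx ltr01 subr0 sqrtr1 divr1 => /(_ isT).
  exact: le_trans (normc_ge0 _).
pose v s := Re (e * G (s%:C * zeta)) + 2 * E * Num.sqrt (1 - s).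
pose dv s := Re (e * zeta * 'D_1 G (s%:C * zeta)) +
  2 * E * - (2 * Num.sqrt (1 - s))^-1.
have : v r <= v 0.
  apply: (@ler0_is_derive_nincr v dv) => // s /andP[s0 sr].
    have s01 : 0 <= s < 1 by rewrite s0 (le_lt_trans sr).
    apply: is_deriveD; first exact: is_derive_Re_radial zeta0 (dG s s01).
    by apply: is_deriveZ; apply: is_derive_sqrt1B; case/andP: s01.
  have s1 : 0 < 1 - s by rewrite subr_gt0 (lt_trans sr).
  have sqrt_gt0 : 0 < Num.sqrt (1 - s) by rewrite sqrtr_gt0.
  have -> : dv s = Re (e * zeta * 'D_1 G (s%:C * zeta)) - E / Num.sqrt (1 - s).
    by rewrite /dv; congr (_ + _); field; rewrite gt_eqF.
  rewrite subr_le0.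
  apply: le_trans (boundG s _); last by rewrite ltW // (lt_trans sr).
  rewrite -mulrA (le_trans (Re_mul_le_normc _ _ e1)) //.
  by rewrite Normc.normcM zeta1 mul1r.
rewrite /v mul0r subr0 sqrtr1 mulr1 mulrBr raddfB /= lerBlDl.
apply: le_trans.
by rewrite lerDl mulr_ge0 ?sqrtr_ge0 ?mulr_ge0.
Qed.

Lemma bounded_image_disk_little_bloch (G Phi : C -> C) :
  holo_on G (@disk R) -> (forall z, disk z -> cexp (Phi z) = 'D_1 G z) ->
  little_bloch Phi -> bounded_set (G @` @disk R).
Proof.
move=> holoG expPhi /little_bloch_Re_radial_le[A RePhi_le].
have bound_G w : disk w -> normc (G w - G 0) <= 2 * expR A.
  move=> /disk_normc w1; have [zeta zeta1 ->] := polar_decomposition w.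
  apply: normc_le_Re_mul => e e1.
  apply: (@Re_radial_sqrt_le G zeta e (expR A) zeta1 e1).
  - by move=> s s01; apply: holoG; exact: radial_disk.
  - move=> s s01; have /andP[_ s1] := s01.
    rewrite -expPhi; last exact: radial_disk.
    by rewrite normc_cexp -expR_sub_half_ln ?subr_gt0 // ler_expR RePhi_le.
  - by rewrite normc_ge0.
apply: (@normc_le_bounded_set _ (normc (G 0) + 2 * expR A)).
move=> _ [w /bound_G w_disk <-].
by rewrite -(subrK (G 0) (G w)) addrC (le_trans (le_normcD _ _)) // lerD2l.
Qed.

Lemma connected_image_disk (G : C -> C) :
  (forall z, disk z -> {for z, continuous G}) -> connected (G @` @disk R).
Proof.
move=> contG.
have -> : G @` @disk R =
    \bigcup_(w in @disk R) ((fun s : R => G (s%:C * w)) @` `[0, 1]).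
  apply/seteqP; split=> [_ [w w_disk <-]|_ [w w_disk [s s01 <-]]].
    by exists w => //; exists 1; rewrite ?mul1r //= in_itv /= lexx ler01.
  by exists (s%:C * w) => //; exact: disk_scale.
apply: bigcup_connected.
  by exists (G 0) => w _; exists 0; rewrite ?mul0r //= in_itv /= lexx ler01.
move=> w w_disk; apply: connected_continuous_connected.
  exact: segment_connected.
apply: continuous_in_subspaceT => s; rewrite inE /= => s01.
have sw_disk : disk (s%:C * w) by exact: disk_scale.
exact: (continuous_comp (continuous_mul_real w s) (contG _ sw_disk)).
Qed.

Lemma mobiusK (a b c d u : C) : a * d - b * c != 0 -> c * u + d != 0 ->
  mobius d (- b) (- c) a (mobius a b c d u) = u.
Proof.
move=> det0 cud0; rewrite /mobius.
have -> : - c * ((a * u + b) / (c * u + d)) + a = (a * d - b * c) / (c * u + d).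
  by field.
by field; rewrite cud0 det0.
Qed.

Lemma mobius_denom_neq0 (a b c d u : C) : a * d - b * c != 0 -> c * u + d != 0 ->
  - c * mobius a b c d u + a != 0.
Proof.
move=> det0 cud0.
have -> : - c * mobius a b c d u + a = (a * d - b * c) / (c * u + d).
  by rewrite /mobius; field.
by rewrite mulf_neq0 ?invr_eq0.
Qed.

Lemma cvg_affine (p q : C) {T : Type} {F : set_system T} {FF : Filter F}
    {f : T -> C} {l : C} :
  f @ F --> l -> p * f x + q @[x --> F] --> p * l + q.
Proof.
move=> fl; apply: (@cvgD _ C _ F); last exact: cvg_cst.
exact: cvgMl_tmp fl.
Qed.

Lemma continuous_mobius (a b c d z : C) : c * z + d != 0 ->
  {for z, continuous (mobius a b c d)}.
Proof.
move=> cz0.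
have affine_cvg p q : p * x + q @[x --> z] --> p * z + q.
  exact: cvg_affine _ _ (@cvg_id _ (nbhs z)).
exact: (@cvgM _ _ (nbhs z) _ _ _ _ _ (affine_cvg a b)
  (cvgV cz0 (affine_cvg c d))).
Qed.

Lemma mobius_comp_denom_neq0 (F : C -> C) (a b c d z : C) :
  injective F -> {for z, continuous F} -> a * d - b * c != 0 ->
  {for z, continuous (fun w => mobius a b c d (F w))} -> c * F z + d != 0.
Proof.
(* Off z, injectivity of F gives (c F + d) * mobius a b c d F = a F + b.  At
   a pole the left side tends to 0 and the right side to a F z + b, which
   det != 0 keeps away from 0. *)
move=> injF contF det0 contG; apply/negP => /eqP pole.
have dE : d = - (c * F z) by apply/eqP; rewrite -addr_eq0 addrC pole.
have c0 : c != 0.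
  by apply: contraNneq det0 => c0; rewrite dE c0 mul0r oppr0 !mulr0 subr0.
have num0 : a * F z + b != 0.
  have det_eq : a * d - b * c = - (c * (a * F z + b)) by rewrite dE; ring.
  by apply: contraNneq det0 => num0; rewrite det_eq num0 mulr0 oppr0.
have affine_F p q : p * F w + q @[w --> z] --> p * F z + q.
  exact: cvg_affine _ _ contF.
have lhs : (c * F w + d) * mobius a b c d (F w) @[w --> z^'] --> 0.
  rewrite -(mul0r (mobius a b c d (F z))) -pole; apply: cvg_within_filter.
  exact: (@cvgM _ _ (nbhs z) _ _ _ _ _ (affine_F c d) contG).
have rhs : a * F w + b @[w --> z^'] --> a * F z + b.
  exact: cvg_within_filter (affine_F a b).
suff : a * F z + b = 0 by move/eqP; rewrite (negbTE num0).
apply: (@cvg_unique C _ (a * F w + b @[w --> z^'])); [exact: _|exact: rhs|].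
apply: cvg_trans _ lhs; apply: near_eq_cvg; near=> w.
have wz : w != z by near: w; exact: nbhs_dnbhs_neq.
have Fw : F w != F z by apply: contraNneq wz => /injF ->.
have cFw : c * F w + d != 0 by rewrite dE -mulrBr mulf_neq0 // subr_eq0.
by rewrite /mobius mulrC divfK.
Unshelve. all: by end_near.
Qed.

Lemma open_image_disk_mobius (F Finv : C -> C) (a b c d : C) :
  cancel F Finv -> cancel Finv F -> continuous Finv -> a * d - b * c != 0 ->
  (forall z, disk z -> c * F z + d != 0) ->
  open ((fun z => mobius a b c d (F z)) @` @disk R).
Proof.
move=> FK FinvK contFinv det0 pole_free; rewrite openE => _ [z z_disk <-].
set v := mobius a b c d (F z).
have denom_v : - c * v + a != 0 by exact: mobius_denom_neq0 (pole_free z z_disk).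
have near_denom : \forall v' \near v, - c * v' + a != 0.
  exact: cvgr_neq0 (cvg_affine (- c) a (@cvg_id _ (nbhs v))) denom_v.
have near_disk : \forall v' \near v, disk (Finv (mobius d (- b) (- c) a v')).
  have contW : {for v, continuous (Finv \o mobius d (- b) (- c) a)}.
    exact: continuous_comp (continuous_mobius d (- b) _ _ _ denom_v) (contFinv _).
  apply: contW; apply: open_nbhs_nbhs; split; first exact: disk_open.
  by rewrite /= mobiusK ?FK ?pole_free.
have det0' : d * a - - b * - c != 0 by rewrite mulrNN mulrC.
near=> v'; exists (Finv (mobius d (- b) (- c) a v')); first by near: v'.
rewrite FinvK; have := @mobiusK d (- b) (- c) a v' det0'; rewrite !opprK.
by apply; near: v'.
Unshelve. all: by end_near.
Qed.

End ComplexPlane.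

Theorem lemma3p3 (R : realType) (nu F : (R[i])^o -> (R[i])^o)
  (a b c d : (R[i])^o) (Phi : (R[i])^o -> (R[i])^o) :
  asymp_conformal nu ->
  is_F nu F ->
  a * d - b * c != 0 ->
  holo_on (fun z => mobius a b c d (F z)) (@disk R) ->
  (forall z, disk z -> cexp (Phi z) = 'D_1 (fun w => mobius a b c d (F w)) z) ->
  little_bloch Phi ->
  bounded_set ((fun z => mobius a b c d (F z)) @` (@disk R)) /\
  open ((fun z => mobius a b c d (F z)) @` (@disk R)) /\
  connected ((fun z => mobius a b c d (F z)) @` (@disk R)).
Proof.
move=> _ [[Finv [FK [FinvK [contF contFinv]]]] _] det0 holoG expPhi blochPhi.
have contG := @holo_on_continuous R _ _ holoG.
split; first exact: (@bounded_image_disk_little_bloch R _ _ holoG expPhi blochPhi).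
split; last exact: (@connected_image_disk R _ contG).
apply: (@open_image_disk_mobius R _ _ _ _ _ _ FK FinvK contFinv det0) => z z_disk.
exact: (@mobius_comp_denom_neq0 R _ _ _ _ _ _
  (can_inj FK) (contF z) det0 (contG z z_disk)).
Qed.
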